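(* Let $n$ be a positive integer and let $\mathcal F$ be an $\mathcal N$-saturated family of subsets of $[n]$. Let $A,B,C,D\in\mathcal F$ be distinct sets forming an induced butterfly with maximal elements $A,B$, i.e. $C\subset A$, $C\subset B$, $D\subset A$, $D\subset B$, $A,B$ are incomparable and $C,D$ are incomparable. Then there exists $M\in\mathcal F$ such that $C\cup D\subseteq M\subseteq A\cap B$.
   Context: The poset $\mathcal N$ has four elements $a,b,c,d$ with $a<c$, $b<c$, $b<d$ and no other comparabilities. A family $\mathcal Q$ of sets (ordered by inclusion) contains an induced copy of $\mathcal N$ if there are distinct sets in $\mathcal Q$ whose inclusion relations are exactly those of $a,b,c,d$ above. A family $\mathcal F$ of subsets of $[n]=\{1,\dots,n\}$ is $\mathcal N$-saturated if $\mathcal F$ contains no induced copy of $\mathcal N$, but for every $S\subseteq[n]$ with $S\notin\mathcal F$, the family $\mathcal F\cup\{S\}$ contains an induced copy of $\mathcal N$. *)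

From mathcomp Require Import all_boot.
Set Implicit Arguments. Unset Strict Implicit. Unset Printing Implicit Defensive.

Definition incomparable {T : finType} (X Y : {set T}) : bool :=
  ~~ (X \subset Y) && ~~ (Y \subset X).

Definition induced_N {T : finType} (a b c d : {set T}) : bool :=
  [&& uniq [:: a; b; c; d],
      a \subset c, b \subset c, b \subset d,
      incomparable a b, incomparable a d & incomparable c d].

Definition has_induced_N {T : finType} (Q : {set {set T}}) : Prop :=
  exists a b c d, [/\ a \in Q, b \in Q, c \in Q, d \in Q & induced_N a b c d].

Definition N_saturated (n : nat) (F : {set {set 'I_n}}) : Prop :=
  ~ has_induced_N F /\
  forall S : {set 'I_n}, S \notin F -> has_induced_N (S |: F).

From mathcomp Require Import all_boot.
Set Implicit Arguments. Unset Strict Implicit. Unset Printing Implicit Defensive.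

(* Let S be a union and I an intersection of members of F, with S included
   in I.  Induction on |I| shows that some member of F lies between them: if a
   member x of F contains S but not I, replace I by I :&: x.  Otherwise every
   member of F containing S contains I, and I itself belongs to F: if not,
   saturation gives an induced N in I |: F, and replacing I in it by a member
   of F below I (one of those making up S) or above I (one of those cutting I
   out) gives an induced N in F.  Taking S = C :|: D and I = A :&: B, only the
   four inclusions of the butterfly are used. *)

Section InducedN.

Variable T : finType.
Implicit Types a b c d l u : {set T}.

Lemma induced_NE a b c d :
  induced_N a b c d =
  [&& a \subset c, b \subset c, b \subset d,
      incomparable a b, incomparable a d & incomparable c d].
Proof.
rewrite /induced_N; apply: andb_idl; rewrite /incomparable.
case/and5P=> ac bc bd /andP[nab nba] /andP[/andP[nad nda] /andP[ncd ndc]].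
rewrite /= !inE !negb_or andbT; apply/and3P; split.
- apply/and3P; split.
  + by apply: contraNneq nab => ->.
  + by apply: contraNneq nba => ->.
  + by apply: contraNneq nad => ->.
- apply/andP; split.
  + by apply: contraNneq nab => ->.
  + by apply: contraNneq ndc => <-.
- by apply: contraNneq ncd => ->.
Qed.

Lemma induced_N_shrink_a a b c d l :
  induced_N a b c d -> l \subset a -> ~~ (l \subset d) -> induced_N l b c d.
Proof.
rewrite !induced_NE /incomparable.
case/and5P=> ac -> bd /andP[_ nba] /andP[/andP[_ nda] ->] la nld.
rewrite (subset_trans la ac) bd nld /= andbT -andbA; apply/and3P; split.
- by apply: contra nld => /subset_trans; apply.
- by apply: contra nba => /subset_trans; apply.
- by apply: contra nda => /subset_trans; apply.
Qed.

Lemma induced_N_shrink_b a b c d l :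
  induced_N a b c d -> l \subset b -> ~~ (l \subset a) -> induced_N a l c d.
Proof.
rewrite !induced_NE /incomparable.
case/and5P=> -> bc bd /andP[nab _] /andP[-> ->] lb nla.
rewrite (subset_trans lb bc) (subset_trans lb bd) nla /= !andbT.
by apply: contra nab => /subset_trans; apply.
Qed.

Lemma induced_N_grow_c a b c d u :
  induced_N a b c d -> c \subset u -> ~~ (d \subset u) -> induced_N a b u d.
Proof.
rewrite !induced_NE /incomparable.
case/and5P=> ac bc -> -> /andP[-> /andP[ncd _]] cu ndu.
rewrite (subset_trans ac cu) (subset_trans bc cu) ndu /= andbT.
by apply: contra ncd => /(subset_trans cu).
Qed.

Lemma induced_N_grow_d a b c d u :
  induced_N a b c d -> d \subset u -> ~~ (a \subset u) -> induced_N a b c u.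
Proof.
rewrite !induced_NE /incomparable.
case/and5P=> ac -> bd -> /andP[/andP[_ nda] /andP[_ ndc]] du nau.
rewrite ac (subset_trans bd du) nau /=; apply/and3P; split.
- by apply: contra nda => /(subset_trans du).
- by apply: contra nau => /(subset_trans ac).
- by apply: contra ndc => /(subset_trans du).
Qed.

End InducedN.

Section Sandwich.

Variable T : finType.
Variable F : {set {set T}}.
Implicit Types S I x : {set T}.

(* For I, this says that I is the intersection of the members of F containing
   it (the empty intersection being [set: T]); dually for S and unions. *)
Definition intersection_of I :=
  forall y : {set T}, ~~ (y \subset I) ->
  exists2 u, u \in F & (I \subset u) && ~~ (y \subset u).

Definition union_of S :=
  forall y : {set T}, ~~ (S \subset y) ->
  exists2 l, l \in F & (l \subset S) && ~~ (l \subset y).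

Lemma mem_intersection_of x : x \in F -> intersection_of x.
Proof. by move=> xF y nyx; exists x; rewrite ?subxx. Qed.

Lemma intersection_ofI I x :
  intersection_of I -> x \in F -> intersection_of (I :&: x).
Proof.
move=> I_cap xF y; rewrite subsetI negb_and => /orP[nyI | nyx].
  have [u uF /andP[Iu nyu]] := I_cap y nyI.
  by exists u; rewrite // nyu (subset_trans (subsetIl I x) Iu).
by exists x; rewrite // subsetIr.
Qed.

Lemma mem_union_of x : x \in F -> union_of x.
Proof. by move=> xF y nxy; exists x; rewrite ?subxx. Qed.

Lemma union_ofU S1 S2 : union_of S1 -> union_of S2 -> union_of (S1 :|: S2).
Proof.
move=> S1_cup S2_cup y; rewrite subUset negb_and => /orP[nS1y | nS2y].
  have [l lF /andP[lS1 nly]] := S1_cup y nS1y.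
  by exists l; rewrite // nly (subset_trans lS1 (subsetUl S1 S2)).
have [l lF /andP[lS2 nly]] := S2_cup y nS2y.
by exists l; rewrite // nly (subset_trans lS2 (subsetUr S1 S2)).
Qed.

Hypothesis F_N_free : ~ has_induced_N F.

Lemma no_induced_N_setU1 I :
  (forall x, x \in F -> ~~ (I \subset x) ->
     exists2 l, l \in F & (l \subset I) && ~~ (l \subset x)) ->
  intersection_of I -> ~ has_induced_N (I |: F).
Proof.
move=> below above [a [b [c [d [Ha Hb Hc Hd abcd]]]]].
have memF x : x \in I |: F -> x != I -> x \in F.
  by rewrite in_setU1 => /predU1P[->|//]; rewrite eqxx.
have := abcd; rewrite /induced_N /= !inE !negb_or.
case/andP=> /and4P[/and3P[ab ac ad] /andP[bc bd] cd _] _.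
have := abcd; rewrite induced_NE /incomparable.
case/and5P=> _ _ _ /andP[nab nba] /andP[/andP[nad nda] /andP[ncd ndc]].
case: (eqVneq a I) => [aI | aI].
  subst a; move: ab ac ad; rewrite !(eq_sym I) => ab ac ad.
  have [l lF /andP[lI nld]] := below d (memF d Hd ad) nad.
  apply: F_N_free; exists l, b, c, d; split=> //; try exact: memF.
  exact: induced_N_shrink_a abcd lI nld.
case: (eqVneq b I) => [bI | bI].
  subst b; move: bc bd; rewrite !(eq_sym I) => bc bd.
  have [l lF /andP[lI nla]] := below a (memF a Ha aI) nba.
  apply: F_N_free; exists a, l, c, d; split=> //; try exact: memF.
  exact: induced_N_shrink_b abcd lI nla.
case: (eqVneq c I) => [cI | cI].
  subst c; rewrite eq_sym in cd.
  have [u uF /andP[Iu ndu]] := above d ndc.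
  apply: F_N_free; exists a, b, u, d; split=> //; try exact: memF.
  exact: induced_N_grow_c abcd Iu ndu.
case: (eqVneq d I) => [dI | dI].
  subst d; have [u uF /andP[Iu nau]] := above a nad.
  apply: F_N_free; exists a, b, c, u; split=> //; try exact: memF.
  exact: induced_N_grow_d abcd Iu nau.
by apply: F_N_free; exists a, b, c, d; split=> //; exact: memF.
Qed.

Hypothesis F_N_saturated : forall S, S \notin F -> has_induced_N (S |: F).

Lemma exists_mem_between S I :
  union_of S -> intersection_of I -> S \subset I ->
  exists2 M, M \in F & (S \subset M) && (M \subset I).
Proof.
move=> S_cup; move Hk: #|I| => k; elim/ltn_ind: k I Hk => k IH I Ik I_cap SI.
case: (boolP [exists x in F, (S \subset x) && ~~ (I \subset x)]).
  case/exists_inP=> x xF /andP[Sx nIx].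
  have ltIx : #|I :&: x| < k.
    by rewrite -Ik proper_card // properE subsetIl subsetI subxx.
  have SIx : S \subset I :&: x by rewrite subsetI SI Sx.
  have [M MF /andP[SM MIx]] :=
    IH _ ltIx _ erefl (intersection_ofI I_cap xF) SIx.
  by exists M; rewrite // SM (subset_trans MIx (subsetIl I x)).
move/exists_inPn=> I_least.
have [IF | IF] := boolP (I \in F); first by exists I; rewrite ?SI ?subxx.
case: (no_induced_N_setU1 _ I_cap (F_N_saturated IF)) => x xF nIx.
have nSx : ~~ (S \subset x).
  by apply: contra nIx => Sx; have := I_least x xF; rewrite Sx negbK.
have [l lF /andP[lS nlx]] := S_cup x nSx.
by exists l; rewrite // nlx (subset_trans lS SI).
Qed.

End Sandwich.

Theorem corollary2p4 (n : nat) (F : {set {set 'I_n}}) (A B C D : {set 'I_n}) :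
  0 < n ->
  N_saturated F ->
  A \in F -> B \in F -> C \in F -> D \in F ->
  uniq [:: A; B; C; D] ->
  C \subset A -> C \subset B -> D \subset A -> D \subset B ->
  incomparable A B -> incomparable C D ->
  exists2 M, M \in F & (C :|: D \subset M) && (M \subset A :&: B).
Proof.
move=> _ [N_free saturated] AF BF CF DF _ CA CB DA DB _ _.
apply: (exists_mem_between N_free saturated).
- exact: union_ofU (mem_union_of CF) (mem_union_of DF).
- exact: intersection_ofI (mem_intersection_of AF) BF.
- by rewrite subUset !subsetI CA CB DA DB.
Qed.
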